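(* Let $p,q$ be distinct positive integers and $n\ge1$. For every $x\in\{p,q\}^n$ and every sequence $s=(s_1,\dots,s_m)$, $m\ge1$, of elements of $\{p,q\}$, $$RLD^{p,q}_n(x, s_{1:m}) = RLD^{p,q}_n(y_1,(s_1))\circ RLD^{p,q}_n(y_2,(s_2))\circ\cdots\circ RLD^{p,q}_n(y_m,(s_m)),$$ where $\circ$ denotes concatenation, $y_1=x$, and $y_i=A^{p,q}_n(y_{i-1},(s_{i-1}))$ for $1<i\le m$.
   Context: Let $p,q$ be distinct positive integers. Define $\mathrm{Opp}(p)=q$, $\mathrm{Opp}(q)=p$. For $x\in\{p,q\}$ and a finite sequence $s=(s_1,\dots,s_m)$ of positive integers, $RLD^{p,q}(x,s)$ is the sequence over $\{p,q\}$ consisting of $s_1$ copies of $x$, then $s_2$ copies of $\mathrm{Opp}(x)$, then $s_3$ copies of $x$, and so on alternately. For $n\ge1$ and $x=(x_1,\dots,x_n)\in\{p,q\}^n$: $RLD^{p,q}_1(x_1,s)=RLD^{p,q}(x_1,s)$ and $RLD^{p,q}_n(x_{1:n},s)=RLD^{p,q}(x_n, RLD^{p,q}_{n-1}(x_{1:n-1},s))$. For a nonempty sequence $t$ over $\{p,q\}$, $\mathrm{OppEnd}(t)=\mathrm{Opp}(\text{last entry of } t)$. The automaton $A^{p,q}_n$ has state set $\{p,q\}^n$; for a state $x$ and a nonempty finite sequence $s$ over $\{p,q\}$, $A^{p,q}_n(x,s)$ is the state whose $i$-th coordinate is $\mathrm{OppEnd}(RLD^{p,q}_i(x_{1:i},s))$,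 $i=1,\dots,n$. *)

From mathcomp Require Import all_boot.
Set Implicit Arguments. Unset Strict Implicit. Unset Printing Implicit Defensive.

(* Opp over {p,q}: Opp p = q, Opp q = p (values outside {p,q} are never used). *)
Definition Opp (p q x : nat) : nat := if x == p then q else p.

Fixpoint RLD (p q x : nat) (s : seq nat) : seq nat :=
  match s with
  | [::] => [::]
  | a :: s' => nseq a x ++ RLD p q (Opp p q x) s'
  end.

(* RLD^{p,q}_n(x_{1:n}, s), x given as the list [:: x_1; ...; x_n]:
   RLD_n(x_{1:n},s) = RLD(x_n, RLD_{n-1}(x_{1:n-1}, s)). *)
Definition RLDn (p q : nat) (x : seq nat) (s : seq nat) : seq nat :=
  foldl (fun t xi => RLD p q xi t) s x.

(* OppEnd(t) = Opp(last entry of t) (t nonempty in all uses). *)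
Definition OppEnd (p q : nat) (t : seq nat) : nat := Opp p q (last 0 t).

Definition Aut (p q : nat) (x : seq nat) (s : seq nat) : seq nat :=
  [seq OppEnd p q (RLDn p q (take i x) s) | i <- iota 1 (size x)].

Fixpoint states (p q : nat) (x : seq nat) (s : seq nat) : seq (seq nat) :=
  match s with
  | [::] => [::]
  | a :: s' => x :: states p q (Aut p q x [:: a]) s'
  end.

From mathcomp Require Import all_boot.

(* Run-length decoding is a homomorphism up to its starting letter:
   RLD(c, s1 s2) = RLD(c, s1) RLD(c', s2), where c' is the letter following the
   last run of RLD(c, s1), i.e. OppEnd(RLD(c, s1)) as soon as all run lengths
   are positive.  Applying this at each of the n levels, the letters needed to
   resume decoding after s1 are exactly the coordinates of A_n(x, s1), so
   RLD_n(x, s1 s2) = RLD_n(x, s1) RLD_n(A_n(x, s1), s2); peeling off one symbol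
   of s at a time gives the theorem. *)

Section RunLengthDecoding.

Variables p q : nat.
Hypotheses (p_gt0 : 0 < p) (q_gt0 : 0 < q).

Local Notation opp := (Opp p q).
Local Notation rld := (RLD p q).
Local Notation rldn := (RLDn p q).

Lemma Opp_neq0 c : opp c != 0.
Proof. by rewrite /Opp -!lt0n; case: (c == p). Qed.

Lemma RLD_cat c s1 s2 : rld c (s1 ++ s2) = rld c s1 ++ rld (iter (size s1) opp c) s2.
Proof. by elim: s1 c => [|a s1 IHs] c //=; rewrite IHs catA -iterSr. Qed.

Lemma RLD_notin0 (c : nat) (s : seq nat) : c != 0 -> 0 \notin rld c s.
Proof.
elim: s c => [|a s IHs] c c_neq0 //=.
rewrite mem_cat negb_or IHs ?Opp_neq0 // andbT.
by apply/nseqP => -[c0]; rewrite c0 eqxx in c_neq0.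
Qed.

Lemma RLD_eq_nil (c : nat) (s : seq nat) :
  0 \notin s -> (rld c s == [::]) = (s == [::]).
Proof. by case: s => [|[|a] s] //; rewrite inE. Qed.

Lemma last_RLD (c y : nat) (s : seq nat) : 0 \notin s -> s != [::] ->
  last y (rld c s) = iter (size s).-1 opp c.
Proof.
elim: s c y => [|[|a] s IHs] c y //=; rewrite inE negb_or => /andP [_ s_notin0] _.
rewrite last_cat /=; case: s IHs s_notin0 => [|b s] IHs s_notin0 /=.
  by elim: a.
by rewrite IHs // -iterSr.
Qed.

Lemma OppEnd_RLD (c : nat) (s : seq nat) : 0 \notin s -> s != [::] ->
  OppEnd p q (rld c s) = iter (size s) opp c.
Proof.
move=> s_notin0 s_neq0; rewrite /OppEnd last_RLD //.
by case: s s_neq0 {s_notin0}.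
Qed.

Lemma RLDn_rcons x c s : rldn (rcons x c) s = rld c (rldn x s).
Proof. exact: foldl_rcons. Qed.

Lemma RLDn_nil x : rldn x [::] = [::].
Proof. by elim: x. Qed.

Lemma RLDn_notin0 (x s : seq nat) : 0 \notin x -> 0 \notin s -> 0 \notin rldn x s.
Proof.
elim/last_ind: x => [|x c IHx] // /[!(mem_rcons, inE, negb_or)].
move=> /andP [c_neq0 x_notin0] s_notin0.
by rewrite RLDn_rcons RLD_notin0 // eq_sym.
Qed.

Lemma RLDn_eq_nil (x s : seq nat) : 0 \notin x -> 0 \notin s ->
  (rldn x s == [::]) = (s == [::]).
Proof.
elim/last_ind: x => [|x c IHx] // /[!(mem_rcons, inE, negb_or)].
move=> /andP [_ x_notin0] s_notin0.
by rewrite RLDn_rcons RLD_eq_nil ?IHx ?RLDn_notin0.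
Qed.

Lemma Aut_rcons x c s :
  Aut p q (rcons x c) s = rcons (Aut p q x s) (OppEnd p q (rldn (rcons x c) s)).
Proof.
rewrite /Aut size_rcons -[(size x).+1]addn1 iotaD map_cat add1n -!cats1.
congr (_ ++ [:: _]); last by rewrite take_oversize ?size_cat ?addn1.
apply/eq_in_map => i; rewrite mem_iota add1n ltnS => /andP [_ le_i_x].
by rewrite takel_cat.
Qed.

Lemma Aut_notin0 x s : 0 \notin Aut p q x s.
Proof. by apply/mapP => -[i _ /eqP]; rewrite eq_sym (negbTE (Opp_neq0 _)). Qed.

Lemma RLDn_cat (x s1 s2 : seq nat) : 0 \notin x -> 0 \notin s1 -> s1 != [::] ->
  rldn x (s1 ++ s2) = rldn x s1 ++ rldn (Aut p q x s1) s2.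
Proof.
move=> + s1_notin0 s1_neq0.
elim/last_ind: x => [|x c IHx] // /[!(mem_rcons, inE, negb_or)] /andP [_ x_notin0].
rewrite Aut_rcons !RLDn_rcons IHx // RLD_cat OppEnd_RLD ?RLDn_notin0 //.
by rewrite RLDn_eq_nil.
Qed.

Lemma RLDn_states (x s : seq nat) : 0 \notin x -> 0 \notin s ->
  rldn x s = flatten [seq rldn ya.1 [:: ya.2] | ya <- zip (states p q x s) s].
Proof.
elim: s x => [|a s IHs] x x_notin0 /=; first by rewrite RLDn_nil.
rewrite inE negb_or => /andP [a_neq0 s_notin0].
by rewrite -IHs ?Aut_notin0 // -(RLDn_cat x [:: a] s) // inE.
Qed.

End RunLengthDecoding.

Theorem corollary1 (p q n : nat) (x s : seq nat) :
  0 < p -> 0 < q -> p != q -> 1 <= n ->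
  size x = n -> all (fun a => (a == p) || (a == q)) x ->
  1 <= size s -> all (fun a => (a == p) || (a == q)) s ->
  RLDn p q x s =
    flatten [seq RLDn p q ya.1 [:: ya.2] | ya <- zip (states p q x s) s].
Proof.
move=> p_gt0 q_gt0 _ _ _ x_pq _ s_pq.
have notin0 t : all (fun a => (a == p) || (a == q)) t -> 0 \notin t.
  by move=> /allP t_pq; apply/negP => /t_pq; rewrite !ltn_eqF.
by apply: RLDn_states; rewrite ?notin0.
Qed.
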